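(* In the standing setting, let $(A,B,R,\sigma)$ be a normalized context and $(g,f)\in\mathcal{FC}$ with $g^{\uparrow}\ne f_\bot$ and $f^{\downarrow}\ne g_\bot$. Then $\langle f^{\downarrow},f\rangle$ and $\langle g,g^{\uparrow}\rangle$ belong to $\mathcal M$ and $\langle f^{\downarrow},f\rangle\preceq\langle g,g^{\uparrow}\rangle$ (equivalently, $f^{\downarrow}\preceq_2 g$ pointwise).
   Context: Adjoint triple: for posets $(P_1,\le_1),(P_2,\le_2),(P_3,\le_3)$, maps $\&\colon P_1\times P_2\to P_3$, $\swarrow\colon P_3\times P_2\to P_1$, $\nwarrow\colon P_3\times P_1\to P_2$ with $x\le_1 z\swarrow y \iff x\,\&\,y\le_3 z \iff y\le_2 z\nwarrow x$ for all $x,y,z$. For lower-bounded posets, $\&$ has zero-divisors if there are $x\ne\bot_1$, $y\neq\bot_2$ with $x\,\&\,y=\bot_3$. Standing setting: $(L_1,\preceq_1,\bot_1,\top_1)$ and $(L_2,\preceq_2,\bot_2,\top_2)$ are complete lattices and $(P,\le,\bot,\top)$ is a bounded poset. A multi-adjoint frame consists of adjoint triples $(\&_i,\swarrow^i,\nwarrow_i)$, $i=1,\dots,n$, with respect to $L_1,L_2,P$; a property-oriented frame consists of adjoint triples $(\&^p_j,\swarrow_p^j,\nwarrow^p_j)$, $j=1,\dots,m$, with respect to $P,L_2,L_1$; an object-oriented frame consists of adjoint triples $(\&^o_k,\swarrow_o^k,\nwarrow^o_k)$, $k=1,\dots,s$, with respect to $L_1,P,L_2$. All conjunctors $\&_i,\&^p_j,\&^o_k$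 have no zero-divisors. A context $(A,B,R,\sigma)$ consists of non-empty sets $A,B$, $R\colon A\times B\to P$, and maps $\sigma,\sigma_p,\sigma_o$ from $A\times B$ to the index sets of the three frames. It is normalized if every $a\in A$ has $b_1,b_2\in B$ with $R(a,b_1)\ne\bot$, $R(a,b_2)=\bot$, and every $b\in B$ has $a_1,a_2\in A$ with $R(a_1,b)\neq\bot$, $R(a_2,b)=\bot$. Concept-forming operators: $g^{\uparrow}(a)=\inf\{R(a,b)\swarrow^{\sigma(a,b)}g(b)\mid b\in B\}$ for $g\in L_2^B$ and $f^{\downarrow}(b)=\inf\{R(a,b)\nwarrow_{\sigma(a,b)}f(a)\mid a\in A\}$ for $f\in L_1^A$. Multi-adjoint concept lattice $\mathcal M=\{\langle g,f\rangle\mid g\in L_2^B,f\in L_1^A,\ g^{\uparrow}=f,\ f^{\downarrow}=g\}$, ordered by $\langle g_1,f_1\rangle\preceq\langle g_2,f_2\rangle$ iff $g_1\preceq_2 g_2$ pointwise. Fuzzy necessity operators: $g^{\uparrow_N}(a)=\inf\{g(b)\swarrow_o^{\sigma_o(a,b)}R(a,b)\mid b\in B\}$ and $f^{\downarrow^N}(b)=\inf\{f(a)\nwarrow^p_{\sigma_p(a,b)}R(a,b)\mid a\in A\}$. $\mathcal F_N=\{(g,f)\mid g\in L_2^B,\ f\in L_1^A,\ g^{\uparrow_N}=f,\ f^{\downarrow^N}=g\}$. For $X\subseteq B$, $\chi_X\in L_2^B$ takes value $\top_2$ on $X$ and $\bot_2$ elsewhere; for $Y\subseteq A$, $\chi_Y\in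 L_1^A$ takes value $\top_1$ on $Y$ and $\bot_1$ elsewhere. $\mathcal{FC}=\{(\chi_X,\chi_Y)\in\mathcal F_N\mid \varnothing\ne X\subsetneq B,\ \varnothing\neq Y\subsetneq A\}$. $g_\bot\in L_2^B$, $f_\bot\in L_1^A$ are the constant maps with values $\bot_2,\bot_1$. *)

From mathcomp Require Import ssreflect ssrbool ssrnat fintype.
Set Implicit Arguments.
Unset Strict Implicit.

Record BPoset := {
  bp_car :> Type;
  bp_le : bp_car -> bp_car -> Prop;
  bp_refl : forall x, bp_le x x;
  bp_trans : forall x y z, bp_le x y -> bp_le y z -> bp_le x z;
  bp_antisym : forall x y, bp_le x y -> bp_le y x -> x = y;
  bp_bot : bp_car;
  bp_top : bp_car;
  bp_bot_le : forall x, bp_le bp_bot x;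
  bp_le_top : forall x, bp_le x bp_top
}.

Record CLattice := {
  cl_car :> Type;
  cl_le : cl_car -> cl_car -> Prop;
  cl_refl : forall x, cl_le x x;
  cl_trans : forall x y z, cl_le x y -> cl_le y z -> cl_le x z;
  cl_antisym : forall x y, cl_le x y -> cl_le y x -> x = y;
  cl_inf : (cl_car -> Prop) -> cl_car;
  cl_inf_lb : forall (S : cl_car -> Prop) x, S x -> cl_le (cl_inf S) x;
  cl_inf_glb : forall (S : cl_car -> Prop) y,
      (forall x, S x -> cl_le y x) -> cl_le y (cl_inf S)
}.

Definition cl_bot (L : CLattice) : L := cl_inf (fun _ => True).
Definition cl_top (L : CLattice) : L := cl_inf (fun _ => False).

Definition adjoint_triple (P1 P2 P3 : Type)
  (le1 : P1 -> P1 -> Prop) (le2 : P2 -> P2 -> Prop) (le3 : P3 -> P3 -> Prop)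
  (conj : P1 -> P2 -> P3) (sw : P3 -> P2 -> P1) (nw : P3 -> P1 -> P2) : Prop :=
  forall x y z,
    (le1 x (sw z y) <-> le3 (conj x y) z) /\ (le3 (conj x y) z <-> le2 y (nw z x)).

Definition no_zero_divisors (P1 P2 P3 : Type) (bot1 : P1) (bot2 : P2) (bot3 : P3)
  (conj : P1 -> P2 -> P3) : Prop :=
  forall x y, x <> bot1 -> y <> bot2 -> conj x y <> bot3.

Definition normalized (P : BPoset) (A B : Type) (R : A -> B -> P) : Prop :=
  (forall a, exists b1 b2, R a b1 <> bp_bot P /\ R a b2 = bp_bot P) /\
  (forall b, exists a1 a2, R a1 b <> bp_bot P /\ R a2 b = bp_bot P).

Definition up (L1 L2 : CLattice) (P : BPoset) (n : nat) (A B : Type)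
  (R : A -> B -> P) (sigma : A -> B -> 'I_n) (sw : 'I_n -> P -> L2 -> L1)
  (g : B -> L2) : A -> L1 :=
  fun a => cl_inf (fun x => exists b, x = sw (sigma a b) (R a b) (g b)).

Definition down (L1 L2 : CLattice) (P : BPoset) (n : nat) (A B : Type)
  (R : A -> B -> P) (sigma : A -> B -> 'I_n) (nw : 'I_n -> P -> L1 -> L2)
  (f : A -> L1) : B -> L2 :=
  fun b => cl_inf (fun y => exists a, y = nw (sigma a b) (R a b) (f a)).

Definition upN (L1 L2 : CLattice) (P : BPoset) (s : nat) (A B : Type)
  (R : A -> B -> P) (sigma_o : A -> B -> 'I_s) (sw_o : 'I_s -> L2 -> P -> L1)
  (g : B -> L2) : A -> L1 :=
  fun a => cl_inf (fun x => exists b, x = sw_o (sigma_o a b) (g b) (R a b)).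

Definition downN (L1 L2 : CLattice) (P : BPoset) (m : nat) (A B : Type)
  (R : A -> B -> P) (sigma_p : A -> B -> 'I_m) (nw_p : 'I_m -> L1 -> P -> L2)
  (f : A -> L1) : B -> L2 :=
  fun b => cl_inf (fun y => exists a, y = nw_p (sigma_p a b) (f a) (R a b)).

Definition chi (L : CLattice) (T : Type) (X : T -> bool) : T -> L :=
  fun t => if X t then cl_top L else cl_bot L.

Definition in_M (L1 L2 : CLattice) (P : BPoset) (n : nat) (A B : Type)
  (R : A -> B -> P) (sigma : A -> B -> 'I_n)
  (sw : 'I_n -> P -> L2 -> L1) (nw : 'I_n -> P -> L1 -> L2)
  (g : B -> L2) (f : A -> L1) : Prop :=
  up R sigma sw g = f /\ down R sigma nw f = g.

Definition M_le (L1 L2 : CLattice) (A B : Type)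
  (g1 : B -> L2) (f1 : A -> L1) (g2 : B -> L2) (f2 : A -> L1) : Prop :=
  forall b, cl_le (g1 b) (g2 b).

From mathcomp Require Import ssreflect ssrbool ssrnat fintype.
From Stdlib Require Import Classical FunctionalExtensionality.

(* As chi_Y and chi_X determine each other through the fuzzy necessity
   operators, and the necessity conjunctors have no zero-divisors, R vanishes
   on Y x (B \ X) and on (A \ Y) x X.  Again by the absence of zero-divisors,
   f^down then vanishes off X, and the closures f^(down up) and g^(up down)
   vanish off Y and off X respectively; the hypotheses g^up <> bot and
   f^down <> bot supply top <> bot and the points where this argument is
   applied.  The Galois inequalities f <= f^(down up) and g <= g^(up down)
   then force equality, and f^down <= chi_X = g. *)

Set Implicit Arguments.
Unset Strict Implicit.

Lemma cl_bot_le (L : CLattice) (x : L) : cl_le (cl_bot L) x.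
Proof. exact: cl_inf_lb. Qed.

Lemma cl_le_top (L : CLattice) (x : L) : cl_le x (cl_top L).
Proof. by apply: cl_inf_glb. Qed.

Lemma cl_le_bot_eq (L : CLattice) (x : L) : cl_le x (cl_bot L) -> x = cl_bot L.
Proof. by move=> le_x0; apply: cl_antisym => //; exact: cl_bot_le. Qed.

Lemma bp_le_bot_eq (P : BPoset) (x : P) : bp_le x (bp_bot P) -> x = bp_bot P.
Proof. by move=> le_x0; apply: bp_antisym => //; exact: bp_bot_le. Qed.

Lemma ex_neq_bot (L : CLattice) (T : Type) (h : T -> L) :
  h <> (fun _ => cl_bot L) -> exists t, h t <> cl_bot L.
Proof.
move=> h_neq0; apply: NNPP => h0; apply: h_neq0.
apply: functional_extensionality => t; apply: NNPP => ht; exact: h0 (ex_intro _ t ht).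
Qed.

Lemma cl_top_neq_bot (L : CLattice) (T : Type) (h : T -> L) :
  h <> (fun _ => cl_bot L) -> cl_top L <> cl_bot L.
Proof.
move=> h_neq0 top0; apply: h_neq0; apply: functional_extensionality => t.
by apply: cl_le_bot_eq; rewrite -top0; exact: cl_le_top.
Qed.

Section Characteristic.
Variables (L : CLattice) (T : Type) (Y : T -> bool).

Lemma chi_in t : Y t -> chi L Y t = cl_top L.
Proof. by rewrite /chi => ->. Qed.

Lemma chi_notin t : ~~ Y t -> chi L Y t = cl_bot L.
Proof. by rewrite /chi => /negbTE ->. Qed.

Lemma le_chi (h : T -> L) :
  (forall t, ~~ Y t -> h t = cl_bot L) -> forall t, cl_le (h t) (chi L Y t).
Proof.
move=> h0 t; case Yt: (Y t); first by rewrite chi_in //; exact: cl_le_top.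
by rewrite h0 ?Yt // chi_notin ?Yt //; exact: cl_refl.
Qed.

Lemma eq_chi (h : T -> L) :
  (forall t, cl_le (chi L Y t) (h t)) -> (forall t, ~~ Y t -> h t = cl_bot L) ->
  h = chi L Y.
Proof.
move=> ge_h h0; apply: functional_extensionality => t.
by apply: cl_antisym; [exact: le_chi | exact: ge_h].
Qed.

End Characteristic.

Section AdjointTriple.
Variables (P1 P2 P3 : Type).
Variables (le1 : P1 -> P1 -> Prop) (le2 : P2 -> P2 -> Prop) (le3 : P3 -> P3 -> Prop).
Variables (conj : P1 -> P2 -> P3) (sw : P3 -> P2 -> P1) (nw : P3 -> P1 -> P2).
Hypothesis adj : adjoint_triple le1 le2 le3 conj sw nw.

Lemma adjoint_swP x y z : le1 x (sw z y) <-> le3 (conj x y) z.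
Proof. exact: proj1 (adj x y z). Qed.

Lemma adjoint_nwP x y z : le2 y (nw z x) <-> le3 (conj x y) z.
Proof. exact: iff_sym (proj2 (adj x y z)). Qed.

End AdjointTriple.

Section NoZeroDivisors.
Variables (P1 P2 P3 : Type) (bot1 : P1) (bot2 : P2) (bot3 : P3).
Variable conj : P1 -> P2 -> P3.
Hypothesis nzd : no_zero_divisors bot1 bot2 bot3 conj.

Lemma no_zero_divisors_eq_l x y : y <> bot2 -> conj x y = bot3 -> x = bot1.
Proof. by move=> y_neq0 xy0; apply: NNPP => x_neq0; exact: nzd x_neq0 y_neq0 xy0. Qed.

Lemma no_zero_divisors_eq_r x y : x <> bot1 -> conj x y = bot3 -> y = bot2.
Proof. by move=> x_neq0 xy0; apply: NNPP => y_neq0; exact: nzd x_neq0 y_neq0 xy0. Qed.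

End NoZeroDivisors.

Section NecessityFrames.
Variables (L1 L2 : CLattice) (P : BPoset) (A B : Type) (R : A -> B -> P).
Variables (X : B -> bool) (Y : A -> bool).

Variables (s : nat) (conj_o : 'I_s -> L1 -> P -> L2).
Variables (sw_o : 'I_s -> L2 -> P -> L1) (nw_o : 'I_s -> L2 -> L1 -> P).
Hypothesis adj_o :
  forall k, adjoint_triple (@cl_le L1) (@bp_le P) (@cl_le L2) (conj_o k) (sw_o k) (nw_o k).
Hypothesis nzd_o : forall k, no_zero_divisors (cl_bot L1) (bp_bot P) (cl_bot L2) (conj_o k).
Variable sigma_o : A -> B -> 'I_s.

Lemma upN_chi_R_bot :
  cl_top L1 <> cl_bot L1 -> upN R sigma_o sw_o (chi L2 X) = chi L1 Y ->
  forall a b, Y a -> ~~ X b -> R a b = bp_bot P.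
Proof.
move=> top_neq0 fixN a b Ya nXb.
have : cl_le (chi L1 Y a) (sw_o (sigma_o a b) (chi L2 X b) (R a b)).
  by rewrite -fixN; apply: cl_inf_lb; exists b.
rewrite chi_in // chi_notin // => /(adjoint_swP (@adj_o _)) /cl_le_bot_eq.
exact/(no_zero_divisors_eq_r (@nzd_o _) top_neq0).
Qed.

Variables (m : nat) (conj_p : 'I_m -> P -> L2 -> L1).
Variables (sw_p : 'I_m -> L1 -> L2 -> P) (nw_p : 'I_m -> L1 -> P -> L2).
Hypothesis adj_p :
  forall j, adjoint_triple (@bp_le P) (@cl_le L2) (@cl_le L1) (conj_p j) (sw_p j) (nw_p j).
Hypothesis nzd_p : forall j, no_zero_divisors (bp_bot P) (cl_bot L2) (cl_bot L1) (conj_p j).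
Variable sigma_p : A -> B -> 'I_m.

Lemma downN_chi_R_bot :
  cl_top L2 <> cl_bot L2 -> downN R sigma_p nw_p (chi L1 Y) = chi L2 X ->
  forall a b, ~~ Y a -> X b -> R a b = bp_bot P.
Proof.
move=> top_neq0 fixN a b nYa Xb.
have : cl_le (chi L2 X b) (nw_p (sigma_p a b) (chi L1 Y a) (R a b)).
  by rewrite -fixN; apply: cl_inf_lb; exists a.
rewrite chi_in // chi_notin // => /(adjoint_nwP (@adj_p _)) /cl_le_bot_eq.
exact/(no_zero_divisors_eq_l (@nzd_p _) top_neq0).
Qed.

End NecessityFrames.

Section MultiAdjointFrame.
Variables (L1 L2 : CLattice) (P : BPoset) (n : nat).
Variables (conj : 'I_n -> L1 -> L2 -> P).
Variables (sw : 'I_n -> P -> L2 -> L1) (nw : 'I_n -> P -> L1 -> L2).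
Hypothesis adj :
  forall i, adjoint_triple (@cl_le L1) (@cl_le L2) (@bp_le P) (conj i) (sw i) (nw i).
Variables (A B : Type) (R : A -> B -> P) (sigma : A -> B -> 'I_n).

Local Notation upR := (up R sigma sw).
Local Notation downR := (down R sigma nw).

Lemma up_le_sw (g : B -> L2) a b : cl_le (upR g a) (sw (sigma a b) (R a b) (g b)).
Proof. by apply: cl_inf_lb; exists b. Qed.

Lemma down_le_nw (f : A -> L1) a b : cl_le (downR f b) (nw (sigma a b) (R a b) (f a)).
Proof. by apply: cl_inf_lb; exists a. Qed.

Lemma le_up_down (f : A -> L1) a : cl_le (f a) (upR (downR f) a).
Proof.
apply: cl_inf_glb => _ [b ->].
apply/(adjoint_swP (@adj _))/(adjoint_nwP (@adj _)); exact: down_le_nw.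
Qed.

Lemma le_down_up (g : B -> L2) b : cl_le (g b) (downR (upR g) b).
Proof.
apply: cl_inf_glb => _ [a ->].
apply/(adjoint_nwP (@adj _))/(adjoint_swP (@adj _)); exact: up_le_sw.
Qed.

Hypothesis nzd : forall i, no_zero_divisors (cl_bot L1) (cl_bot L2) (bp_bot P) (conj i).

Lemma up_eq_bot (g : B -> L2) a b :
  g b <> cl_bot L2 -> R a b = bp_bot P -> upR g a = cl_bot L1.
Proof.
move=> gb_neq0 Rab0.
have /bp_le_bot_eq : bp_le (conj (sigma a b) (upR g a) (g b)) (bp_bot P).
  by rewrite -Rab0; apply/(adjoint_swP (@adj _)); exact: up_le_sw.
exact/(no_zero_divisors_eq_l (@nzd _) gb_neq0).
Qed.

Lemma down_eq_bot (f : A -> L1) a b :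
  f a <> cl_bot L1 -> R a b = bp_bot P -> downR f b = cl_bot L2.
Proof.
move=> fa_neq0 Rab0.
have /bp_le_bot_eq : bp_le (conj (sigma a b) (f a) (downR f b)) (bp_bot P).
  by rewrite -Rab0; apply/(adjoint_nwP (@adj _)); exact: down_le_nw.
exact/(no_zero_divisors_eq_r (@nzd _) fa_neq0).
Qed.

Section Separated.
Variables (X : B -> bool) (Y : A -> bool).
Hypothesis R_bot_YX : forall a b, Y a -> ~~ X b -> R a b = bp_bot P.
Hypothesis R_bot_XY : forall a b, ~~ Y a -> X b -> R a b = bp_bot P.

Lemma down_bot_notin (f : A -> L1) a :
  Y a -> f a <> cl_bot L1 -> forall b, ~~ X b -> downR f b = cl_bot L2.
Proof. by move=> Ya fa_neq0 b nXb; apply: down_eq_bot fa_neq0 (R_bot_YX Ya nXb). Qed.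

Lemma up_bot_notin (g : B -> L2) b :
  X b -> g b <> cl_bot L2 -> forall a, ~~ Y a -> upR g a = cl_bot L1.
Proof. by move=> Xb gb_neq0 a nYa; apply: up_eq_bot gb_neq0 (R_bot_XY nYa Xb). Qed.

Lemma up_down_chi :
  cl_top L1 <> cl_bot L1 -> (exists a, Y a) ->
  downR (chi L1 Y) <> (fun _ => cl_bot L2) -> upR (downR (chi L1 Y)) = chi L1 Y.
Proof.
move=> top_neq0 [a Ya] /ex_neq_bot [b db_neq0].
have fa_neq0 : chi L1 Y a <> cl_bot L1 by rewrite chi_in.
have Xb : X b.
  by apply/negPn/negP => nXb; exact/db_neq0/(down_bot_notin Ya fa_neq0 nXb).
apply: eq_chi; [exact: le_up_down | exact: up_bot_notin Xb db_neq0].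
Qed.

Lemma down_up_chi :
  cl_top L2 <> cl_bot L2 -> (exists b, X b) ->
  upR (chi L2 X) <> (fun _ => cl_bot L1) -> downR (upR (chi L2 X)) = chi L2 X.
Proof.
move=> top_neq0 [b Xb] /ex_neq_bot [a ua_neq0].
have gb_neq0 : chi L2 X b <> cl_bot L2 by rewrite chi_in.
have Ya : Y a.
  by apply/negPn/negP => nYa; exact/ua_neq0/(up_bot_notin Xb gb_neq0 nYa).
apply: eq_chi; [exact: le_down_up | exact: down_bot_notin Ya ua_neq0].
Qed.

Lemma down_chi_le :
  cl_top L1 <> cl_bot L1 -> (exists a, Y a) ->
  forall b, cl_le (downR (chi L1 Y) b) (chi L2 X b).
Proof.
move=> top_neq0 [a Ya]; apply: le_chi; apply: (down_bot_notin Ya).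
by rewrite chi_in.
Qed.

End Separated.

End MultiAdjointFrame.


Theorem mainTheorem15
  (L1 L2 : CLattice) (P : BPoset) (n m s : nat)
  (* multi-adjoint frame: adjoint triples w.r.t. L1, L2, P *)
  (conj : 'I_n -> L1 -> L2 -> P) (sw : 'I_n -> P -> L2 -> L1) (nw : 'I_n -> P -> L1 -> L2)
  (Hadj : forall i, adjoint_triple (@cl_le L1) (@cl_le L2) (@bp_le P) (conj i) (sw i) (nw i))
  (Hnz : forall i, no_zero_divisors (cl_bot L1) (cl_bot L2) (bp_bot P) (conj i))
  (* property-oriented frame: adjoint triples w.r.t. P, L2, L1 *)
  (conj_p : 'I_m -> P -> L2 -> L1) (sw_p : 'I_m -> L1 -> L2 -> P) (nw_p : 'I_m -> L1 -> P -> L2)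
  (Hadj_p : forall j, adjoint_triple (@bp_le P) (@cl_le L2) (@cl_le L1) (conj_p j) (sw_p j) (nw_p j))
  (Hnz_p : forall j, no_zero_divisors (bp_bot P) (cl_bot L2) (cl_bot L1) (conj_p j))
  (* object-oriented frame: adjoint triples w.r.t. L1, P, L2 *)
  (conj_o : 'I_s -> L1 -> P -> L2) (sw_o : 'I_s -> L2 -> P -> L1) (nw_o : 'I_s -> L2 -> L1 -> P)
  (Hadj_o : forall k, adjoint_triple (@cl_le L1) (@bp_le P) (@cl_le L2) (conj_o k) (sw_o k) (nw_o k))
  (Hnz_o : forall k, no_zero_divisors (cl_bot L1) (bp_bot P) (cl_bot L2) (conj_o k))
  (* context *)
  (A B : Type) (HA : inhabited A) (HB : inhabited B) (R : A -> B -> P)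
  (sigma : A -> B -> 'I_n) (sigma_p : A -> B -> 'I_m) (sigma_o : A -> B -> 'I_s)
  (Hnorm : normalized R)
  (* (g, f) in FC *)
  (X : B -> bool) (Y : A -> bool)
  (HXne : exists b, X b) (HXpr : exists b, ~~ X b)
  (HYne : exists a, Y a) (HYpr : exists a, ~~ Y a)
  (g : B -> L2) (f : A -> L1)
  (Hg : g = chi L2 X) (Hf : f = chi L1 Y)
  (HgN : upN R sigma_o sw_o g = f) (HfN : downN R sigma_p nw_p f = g)
  (* extra hypotheses *)
  (Hup : up R sigma sw g <> (fun _ => cl_bot L1))
  (Hdown : down R sigma nw f <> (fun _ => cl_bot L2)) :
  in_M R sigma sw nw (down R sigma nw f) f /\
  in_M R sigma sw nw g (up R sigma sw g) /\
  M_le (down R sigma nw f) f g (up R sigma sw g).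
Proof.
subst g f.
have top1_neq0 := cl_top_neq_bot Hup.
have top2_neq0 := cl_top_neq_bot Hdown.
have R_bot_YX := upN_chi_R_bot Hadj_o Hnz_o top1_neq0 HgN.
have R_bot_XY := downN_chi_R_bot Hadj_p Hnz_p top2_neq0 HfN.
split; [split | split; [split |]] => //.
- exact: (up_down_chi Hadj Hnz R_bot_YX R_bot_XY top1_neq0 HYne Hdown).
- exact: (down_up_chi Hadj Hnz R_bot_YX R_bot_XY top2_neq0 HXne Hup).
- exact: (down_chi_le Hadj sigma Hnz R_bot_YX top1_neq0 HYne).
Qed.
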